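(* Let $F=\{T_1,\dots,T_n\}$ be a finite family of reduction operators relative to a well-ordered set $(G,<)$ and let $\tilde F=\{\tilde T_1,\dots,\tilde T_n\}$ be the reduction of $F$. Then $\wedge\tilde F=\wedge F$ and $\mathrm{obs}(F)\subseteq\mathrm{obs}(\tilde F)$.
   Context: Let $\mathbb{K}$ be a field, $(G,<)$ a well-ordered set and $\mathbb{K}G$ the vector space with basis $G$. For $v\neq0$, $\mathrm{lt}(v)$ is the greatest element of $G$ appearing with nonzero coefficient in $v$. Extend $<$ to $\mathbb{K}G$: $u<v$ if $u=0$ and $v\neq0$, or if $\mathrm{lt}(u)<\mathrm{lt}(v)$; $u\le v$ means $u<v$ or $u=v$. A reduction operator is an idempotent linear endomorphism $T$ of $\mathbb{K}G$ with $T(g)\le g$ for all $g\in G$; $\mathrm{nf}(T)=\{g\in G\mid T(g)=g\}$, $\mathrm{red}(T)=G\setminus\mathrm{nf}(T)$. For every subspace $V$ there is a unique reduction operator $\ker^{-1}(V)$ with kernel $V$. For a set $F$ of reduction operators, $\wedge F=\ker^{-1}(\sum_{T\in F}\ker T)$, $\mathrm{nf}(F)=\bigcap_{T\in F}\mathrm{nf}(T)$ (which contains $\mathrm{nf}(\wedge F)$), and $\mathrm{obs}(F)=\mathrm{nf}(F)\setminus\mathrm{nf}(\wedge F)$. For $F=\{T_1,\dots,T_n\}$: $\mathbf{ker}(F)=\ker T_1\times\dots\times\ker T_n$, $\pi_F(v_1,\dots,v_n)=v_1+\dots+v_n$, $\mathrm{syz}(F)=\ker\pi_F$. For $g\in\mathrm{red}(T_i)$,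 $e_{i,g}$ is the tuple with $g-T_i(g)$ at position $i$ and $0$ elsewhere; these form a basis of $\mathbf{ker}(F)$, well-ordered by $e_{i,g}\sqsubset e_{i',g'}$ iff $i<i'$, or $i=i'$ and $g<g'$; $\mathrm{lt}(\mathrm{syz}(F))$ is the set of $\sqsubset$-greatest basis elements appearing in nonzero elements of $\mathrm{syz}(F)$. The reduction of $F$ is $\tilde F=\{\tilde T_1,\dots,\tilde T_n\}$ where $\tilde T_i$ is the linear map with $\tilde T_i(g)=g$ if $g\in\mathrm{red}(T_i)$ and $e_{i,g}\in\mathrm{lt}(\mathrm{syz}(F))$, and $\tilde T_i(g)=T_i(g)$ otherwise, for $g\in G$; each $\tilde T_i$ is a reduction operator. *)

(* with multinomials' monoid algebra {malg K[G]} as the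
   free K-vector space K G with basis G (basis vector g is << g >>). *)
From HB Require Import structures.
From mathcomp Require Import all_boot all_order all_algebra.
From mathcomp Require Import finmap.
From mathcomp.multinomials Require Import monalg.
From Stdlib Require Import ClassicalEpsilon.

Set Implicit Arguments.
Unset Strict Implicit.
Unset Printing Implicit Defensive.

Import Order.TTheory GRing.Theory.
Local Open Scope ring_scope.

Section ReductionOperators.
Variables (K : fieldType) (d : Order.disp_t) (G : orderType d).

Definition vec := {malg K[G]}.

(* lt(v): the greatest element of G with nonzero coefficient in v;
   None exactly when v = 0 *)
Definition ltm (v : vec) : option G :=
  foldr (fun x acc => Some (match acc with
                            | None => x
                            | Some y => Order.max x y end))
        None (enum_fset (msupp v)).

Definition vlt (u v : vec) : Prop :=
  match ltm u, ltm v with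
  | None, Some _ => True
  | Some a, Some b => (a < b)%O
  | _, _ => False
  end.

Definition vle (u v : vec) : Prop := vlt u v \/ u = v.

Definition is_redop (T : {linear vec -> vec}) : Prop :=
  (forall v, T (T v) = T v) /\ (forall g : G, vle (T << g >>) << g >>).

Definition nf (T : {linear vec -> vec}) (g : G) : Prop := T << g >> = << g >>.
Definition red (T : {linear vec -> vec}) (g : G) : Prop := ~ nf T g.

Definition kerinv (V : vec -> Prop) : {linear vec -> vec} :=
  epsilon (inhabits (idfun : {linear vec -> vec}))
    (fun T => is_redop T /\ forall v, T v = 0 <-> V v).

Definition sumker n (F : 'I_n -> {linear vec -> vec}) (v : vec) : Prop :=
  exists w : 'I_n -> vec, (forall i, F i (w i) = 0) /\ v = \sum_i w i.

Definition wedge n (F : 'I_n -> {linear vec -> vec}) : {linear vec -> vec} :=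
  kerinv (sumker F).

Definition nfF n (F : 'I_n -> {linear vec -> vec}) (g : G) : Prop :=
  forall i, nf (F i) g.

Definition obs n (F : 'I_n -> {linear vec -> vec}) (g : G) : Prop :=
  nfF F g /\ ~ nf (wedge F) g.

(* c is the coordinate family of w in ker(F) w.r.t. the basis e_{i,g}
   (g in red(T_i)): c i is a finitely supported coefficient function
   (an element of K G) supported in red(T_i), and
   w_i = sum_g c_{i,g} (g - T_i(g)). *)
Definition coords n (F : 'I_n -> {linear vec -> vec}) (w : 'I_n -> vec)
    (c : 'I_n -> vec) : Prop :=
  forall i, (forall g, g \in msupp (c i) -> red (F i) g) /\
    w i = \sum_(g <- msupp (c i)) (c i)@_g *: (<< g >> - F i << g >>).

(* e_{i,g} is in lt(syz(F)): it is the greatest basis element (for the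
   order e_{i,g} [ e_{i',g'} iff i < i' or (i = i' and g < g')) appearing
   in some nonzero element of syz(F) *)
Definition in_lt_syz n (F : 'I_n -> {linear vec -> vec}) (i : 'I_n) (g : G)
    : Prop :=
  exists (w : 'I_n -> vec) (c : 'I_n -> vec),
    (forall j, F j (w j) = 0) /\ coords F w c /\
    \sum_j w j = 0 /\ (exists j, w j != 0) /\
    (c i)@_g != 0 /\
    (forall j h, (c j)@_h != 0 -> (j < i)%N \/ (j = i /\ (h <= g)%O)).

Definition is_reduction n (F Ft : 'I_n -> {linear vec -> vec}) : Prop :=
  forall i (g : G),
    ((red (F i) g /\ in_lt_syz F i g) -> Ft i << g >> = << g >>) /\
    (~ (red (F i) g /\ in_lt_syz F i g) -> Ft i << g >> = F i << g >>).

End ReductionOperators.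

(* Each reduced operator T~_i agrees on every basis element g either with T_i or
   with the identity, so g - T~_i g lies in ker T_i and ker T~_i is contained in
   ker T_i.  Conversely every generator e_{i,g} = g - T_i g of ker T_i lies in
   sum_j ker T~_j, by well-founded induction on (i, g) ordered as the e_{i,g}:
   when T~_i g = T_i g, e_{i,g} is in ker T~_i because T~_i fixes the normal
   forms of T_i; otherwise e_{i,g} is the leading term of a syzygy and hence a
   combination of smaller generators.  So both families have the same kernel
   sum, hence the same wedge, and normal forms of every T_i stay normal forms of
   T~_i. *)
From HB Require Import structures.
From mathcomp Require Import all_boot all_order all_algebra.
From mathcomp Require Import finmap.
From mathcomp.multinomials Require Import monalg.
From Stdlib Require Import Classical FunctionalExtensionality PropExtensionality.

Set Implicit Arguments.
Unset Strict Implicit.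
Unset Printing Implicit Defensive.
Import Order.TTheory GRing.Theory.
Local Open Scope ring_scope.

Section ReductionOfFamilies.
Variables (K : fieldType) (d : Order.disp_t) (G : orderType d).
Local Notation vec := (vec K G).
Implicit Types (S T : {linear vec -> vec}) (v w : vec).

Lemma monalgU_scale (c : K) (x : G) : << c *g x >> = c *: (<< x >> : vec).
Proof. by apply/malgP => k; rewrite mcoeffZ !mcoeffU mulr_natr. Qed.

Lemma linear_monalgE T v : T v = \sum_(x <- msupp v) v@_x *: T << x >>.
Proof.
rewrite {1}[v]monalgE linear_sum; apply: eq_bigr => x _.
by rewrite monalgU_scale linearZ.
Qed.

Lemma linear_fixed_basis T v :
  {in msupp v, forall x, T << x >> = << x >>} -> T v = v.
Proof.
move=> Tx; rewrite linear_monalgE {3}[v]monalgE big_seq [RHS]big_seq.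
by apply: eq_bigr => x /Tx ->; rewrite monalgU_scale.
Qed.

Lemma ker_monalgE T w :
  T w = 0 -> w = \sum_(x <- msupp w) w@_x *: (<< x >> - T << x >>).
Proof.
move=> Tw; transitivity (w - T w); first by rewrite Tw subr0.
rewrite linear_monalgE {1}[w]monalgE -sumrB.
by apply: eq_bigr => x _; rewrite monalgU_scale scalerBr.
Qed.

Lemma ker_subset_of_basis_id_or S T :
    (forall v, T (T v) = T v) ->
    (forall g, S << g >> = << g >> \/ S << g >> = T << g >>) ->
  forall v, S v = 0 -> T v = 0.
Proof.
move=> T_idem S_basis v /ker_monalgE ->; rewrite linear_sum big1 // => x _.
rewrite linearZ linearB /=.
by case: (S_basis x) => ->; rewrite ?T_idem subrr scaler0.
Qed.

Definition smax (s : seq G) : option G :=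
  foldr (fun x acc => Some (match acc with
                            | None => x
                            | Some y => Order.max x y end)) None s.

Lemma smax_spec (s : seq G) :
  match smax s with
  | None => s = [::]
  | Some a => a \in s /\ {in s, forall x, (x <= a)%O}
  end.
Proof.
elim: s => [//|y s] /=; case: (smax s) => [a [sa le_sa]|->].
  split; first by case: (leP y a) => _; rewrite inE ?sa ?eqxx ?orbT.
  move=> x; rewrite inE => /orP [/eqP ->|/le_sa xa]; rewrite le_max ?lexx //.
  by rewrite xa orbT.
by split=> [|x]; rewrite inE // => /eqP ->.
Qed.

Lemma ltm_spec v :
  match ltm v with
  | None => v = 0
  | Some a => a \in msupp v /\ {in msupp v, forall x, (x <= a)%O}
  end.
Proof.
have := smax_spec (enum_fset (msupp v)); rewrite /ltm -/(smax _).
case: (smax _) => // supp_nil; apply/malgP => x; rewrite mcoeff0 mcoeff_outdom //.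
by rewrite -[x \in msupp v]/(x \in enum_fset (msupp v)) supp_nil.
Qed.

Lemma ltmU (g : G) : ltm (<< g >> : vec) = Some g.
Proof.
have := ltm_spec (<< g >> : vec); case: (ltm _) => [a [+ _]|/eqP].
  by rewrite msuppU oner_eq0 inE => /eqP ->.
by rewrite monalgU_eq0 oner_eq0.
Qed.

Section Triangular.
Variable T : {linear vec -> vec}.
Hypothesis T_le : forall g, vle (T << g >>) << g >>.

Lemma msupp_red_lt g : red T g -> {in msupp (T << g >>), forall x, (x < g)%O}.
Proof.
move=> Tg x Tgx; case: (T_le g) => [|//]; rewrite /vlt ltmU.
have := ltm_spec (T << g >>); case: (ltm _) => [a [_ le_a] ag|T0].
  exact: le_lt_trans (le_a _ Tgx) ag.
by move: Tgx; rewrite T0 msupp0 inE.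
Qed.

(* The greatest reducible m in the support of v cannot be reached by T from
   any other element of the support, so it would have coefficient 0 in T v. *)
Lemma fixed_msupp_nf v : T v = v -> {in msupp v, forall x, nf T x}.
Proof.
move=> Tv; pose s := [seq x <- enum_fset (msupp v) | T << x >> != << x >>].
have := smax_spec s; case: (smax s) => [m [+ le_m]|s_nil x vx]; last first.
  apply/eqP; apply: contraT => Tx.
  have : x \in s by rewrite mem_filter Tx.
  by rewrite s_nil.
rewrite mem_filter => /andP [/eqP red_m vm]; exfalso.
have Tx_m : {in msupp v, forall x, (T << x >>)@_m = 0}.
  move=> x vx; have [Tx|Tx] := eqVneq (T << x >>) << x >>.
    by rewrite Tx mcoeffU; case: eqP => // xm; rewrite -xm Tx in red_m.
  apply: mcoeff_outdom; apply/negP => /(msupp_red_lt (elimN eqP Tx)) mx.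
  have : x \in s by rewrite mem_filter Tx.
  by move=> /le_m; rewrite leNgt mx.
move: vm; rewrite -mcoeff_neq0 -Tv linear_monalgE raddf_sum /= big_seq big1 ?eqxx //.
by move=> x vx; rewrite mcoeffZ Tx_m ?mulr0.
Qed.

End Triangular.

Section KernelSum.
Variables (n : nat) (F : 'I_n -> {linear vec -> vec}).

Lemma sumker0 : sumker F 0.
Proof. by exists (fun _ => 0); split => [i|]; rewrite ?linear0 ?big1. Qed.

Lemma sumkerD u v : sumker F u -> sumker F v -> sumker F (u + v).
Proof.
move=> [w1 [Fw1 ->]] [w2 [Fw2 ->]]; exists (fun i => w1 i + w2 i); split.
  by move=> i; rewrite linearD /= Fw1 Fw2 addr0.
by rewrite big_split.
Qed.

Lemma sumkerZ c u : sumker F u -> sumker F (c *: u).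
Proof.
move=> [w [Fw ->]]; exists (fun i => c *: w i); split.
  by move=> i; rewrite linearZ /= Fw scaler0.
by rewrite scaler_sumr.
Qed.

Lemma sumkerN u : sumker F u -> sumker F (- u).
Proof. by rewrite -scaleN1r; apply: sumkerZ. Qed.

Lemma sumker_ker j u : F j u = 0 -> sumker F u.
Proof.
move=> Fu; exists (fun i => if i == j then u else 0); split.
  by move=> i; case: eqP => [->|_]; rewrite ?linear0.
by rewrite (bigD1 j) //= eqxx big1 ?addr0 // => i /negbTE ->.
Qed.

Lemma sumker_sum (I : Type) (r : seq I) (P : pred I) (f : I -> vec) :
  (forall i, P i -> sumker F (f i)) -> sumker F (\sum_(i <- r | P i) f i).
Proof. by move=> Ff; apply: big_ind => //; [exact: sumker0 | exact: sumkerD]. Qed.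

Lemma sumker_lincomb (s : seq G) (P : pred G) (a : G -> K) (f : G -> vec) :
    (forall h, P h -> a h != 0 -> sumker F (f h)) ->
  sumker F (\sum_(h <- s | P h) a h *: f h).
Proof.
move=> Ff; apply: sumker_sum => h Ph; have [->|ah] := eqVneq (a h) 0.
  by rewrite scale0r; exact: sumker0.
exact/sumkerZ/Ff.
Qed.

End KernelSum.

Section KernelSumComparison.
Variables (n m : nat) (F : 'I_n -> {linear vec -> vec}).
Variable H : 'I_m -> {linear vec -> vec}.

Lemma sumker_subset :
  (forall i v, F i v = 0 -> sumker H v) -> forall v, sumker F v -> sumker H v.
Proof. by move=> kerFH _ [w [Fw ->]]; apply: sumker_sum => i _; apply: kerFH. Qed.

(* Solve the syzygy for its leading term. *)
Lemma in_lt_syz_sumker i g :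
    in_lt_syz F i g ->
    (forall (j : 'I_n) h, (j < i)%N \/ (j = i /\ (h < g)%O) ->
       sumker H (<< h >> - F j << h >>)) ->
  sumker H (<< g >> - F i << g >>).
Proof.
move=> [w [c [_ [coords_wc [sum_w0 [_ [cig lead_ig]]]]]]] lower.
have wE j : w j = \sum_(h <- msupp (c j)) (c j)@_h *: (<< h >> - F j << h >>).
  exact: (coords_wc j).2.
set t := (c i)@_g *: (<< g >> - F i << g >>).
have other_w j : j != i -> sumker H (w j).
  move=> ji; rewrite wE; apply: sumker_lincomb => h _ cjh; apply: lower.
  by case: (lead_ig j h cjh) => [|[/eqP]]; [left | rewrite (negbTE ji)].
have rest_wi : sumker H (w i - t).
  have ig : g \in msupp (c i) by rewrite -mcoeff_neq0.
  rewrite wE (bigD1_seq g ig (fset_uniq _)) /= -/t addrC addrK.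
  apply: sumker_lincomb => h hg cih; apply: lower; right; split=> //.
  by case: (lead_ig i h cih) => [|[_]]; rewrite ?ltnn // lt_neqAle hg.
have t_sumker : sumker H t.
  have -> : t = - (\sum_(j | j != i) w j + (w i - t)).
    move/eqP: sum_w0; rewrite (bigD1 i) //= addr_eq0 => /eqP ->.
    by rewrite addrA subrr add0r opprK.
  by apply: sumkerN; apply: sumkerD => //; apply: sumker_sum.
have -> : << g >> - F i << g >> = ((c i)@_g)^-1 *: t.
  by rewrite /t scalerA mulVf // scale1r.
exact: sumkerZ.
Qed.

End KernelSumComparison.

Section Reduction.
Variables (n : nat) (F Ft : 'I_n -> {linear vec -> vec}).
Hypotheses (F_redop : forall i, is_redop (F i)) (Ft_red : is_reduction F Ft).

Lemma reduction_nf i g : nf (F i) g -> nf (Ft i) g.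
Proof. by move=> Fg; have [_ Ftg] := Ft_red i g; rewrite /nf Ftg // => -[]. Qed.

Lemma reduction_basis i g : Ft i << g >> = << g >> \/ Ft i << g >> = F i << g >>.
Proof.
have [Ftg Ftg'] := Ft_red i g.
by have [/Ftg|/Ftg'] := classic (red (F i) g /\ in_lt_syz F i g); [left | right].
Qed.

Lemma reduction_fixed i v : F i v = v -> Ft i v = v.
Proof.
move=> /(fixed_msupp_nf (F_redop i).2) Fv.
by apply: linear_fixed_basis => x /Fv; apply: reduction_nf.
Qed.

Hypothesis wfG : well_founded (fun x y : G => (x < y)%O).

Lemma basis_ker_sumker_reduction i g : sumker Ft (<< g >> - F i << g >>).
Proof.
move Em : (val i) => m; elim/ltn_ind: m i Em g => m IHm i Em; subst m.
elim/(well_founded_ind wfG) => g IHg.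
have [Fg|red_g] := eqVneq (F i << g >>) << g >>.
  by rewrite Fg subrr; exact: sumker0.
have [syz|not_syz] := classic (in_lt_syz F i g).
  apply: in_lt_syz_sumker syz _ => j h [ji|[-> hg]]; last exact: IHg.
  exact: IHm ji j erefl h.
apply: (sumker_ker (j := i)); rewrite linearB /=.
have [_ ->] := Ft_red i g; last by case.
by rewrite reduction_fixed ?subrr // (F_redop i).1.
Qed.

Lemma sumker_reduction : sumker Ft = sumker F.
Proof.
apply: functional_extensionality => v; apply: propositional_extensionality.
split; apply: sumker_subset => i w kerw.
  apply: (sumker_ker (j := i)).
  exact: ker_subset_of_basis_id_or (F_redop i).1 (reduction_basis i) _ kerw.
rewrite (ker_monalgE kerw); apply: sumker_lincomb => x _ _.
exact: basis_ker_sumker_reduction.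
Qed.

End Reduction.

End ReductionOfFamilies.

Theorem mainTheorem7 (K : fieldType) (d : Order.disp_t) (G : orderType d)
    (wfG : well_founded (fun x y : G => (x < y)%O))
    (n : nat) (F Ft : 'I_n -> {linear vec K G -> vec K G})
    (HF : forall i, is_redop (F i))
    (HFt : is_reduction F Ft) :
  wedge Ft = wedge F /\ (forall g : G, obs F g -> obs Ft g).
Proof.
have wedgeE : wedge Ft = wedge F by rewrite /wedge (sumker_reduction HF HFt wfG).
split=> // g [nfF_g not_nf_wedge]; split; last by rewrite wedgeE.
by move=> i; apply: (reduction_nf HFt).
Qed.
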